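(* Let $P\in\mathbb{R}^{p\times m}$, $Y_d\in\mathbb{R}^p$, plant $Y_k=PU_k+N_k$, $E_k=Y_d-Y_k$, $\bar U_k=-\Delta U_k$, $D_k=-\Delta N_k$, so that the extended state $\bar X_k=\begin{bmatrix}E_k\\ D_k\end{bmatrix}\in\mathbb{R}^{2p}$ satisfies $\bar X_{k+1}=\bar A\bar X_k+\bar B\bar U_k+F^{\top}\Delta D_k$ and $E_k=\bar C\bar X_k$, where $\bar B=\begin{bmatrix}P\\0\end{bmatrix}$. Let $\bar L\in\mathbb{R}^{2p\times p}$, let $\hat{\bar X}_0\in\mathbb{R}^{2p}$ be arbitrary, and define the extended state observer (ESO) $\hat{\bar X}_{k+1}=\bar A\hat{\bar X}_k+\bar B\bar U_k+\bar L(E_k-\bar C\hat{\bar X}_k)$, $k\in\mathbb{Z}_+$, for an arbitrary input sequence $(\bar U_k)$. Then: (a) $\hat{\bar X}_{k+1}=(\bar A-\bar L\bar C)\hat{\bar X}_k+\bar B\bar U_k+\bar LE_k$ and the observation error $\tilde{\bar X}_k=\bar X_k-\hat{\bar X}_k$ satisfies $\tilde{\bar X}_{k+1}=(\bar A-\bar L\bar C)\tilde{\bar X}_k-F^{\top}\Delta^2N_k$ for all $k\in\mathbb{Z}_+$; (b) the observation error has the following two properties — (boundedness) there exist a class-$\mathcal{K}_\infty$ function $\chi_1$, a class-$\mathcal{KL}$ function $\zeta$ and a finite $\beta_0\ge0$ with $\|\tilde{\bar X}_k\|\le\chi_1(\beta_{\Delta^2N})+\zeta(\beta_0,k)$ for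 all $k$, and (superattractiveness) there is a class-$\mathcal{K}_\infty$ function $\chi_2$ with $\limsup_{k\to\infty}\|\tilde{\bar X}_k\|\le\chi_2(\beta^{ess}_{\Delta^2N})$ — for all bounded uncertainties and initial conditions if and only if $\rho(\bar A-\bar L\bar C)<1$; (c) there always exists a gain $\bar L\in\mathbb{R}^{2p\times p}$ with $\rho(\bar A-\bar L\bar C)<1$.
   Context: Notation: $\mathbb{Z}_+=\{0,1,2,\dots\}$. For a sequence $(f_k)$, $\Delta f_k=f_{k+1}-f_k$, $\Delta^2f_k=\Delta(\Delta f_k)$. $\|\cdot\|$ is a fixed vector norm, $\rho(\cdot)$ the spectral radius. $(N_k)\subset\mathbb{R}^p$ is an unknown bounded uncertainty sequence; $\beta_{\Delta^2N}=\sup_k\|\Delta^2N_k\|$, $\beta^{ess}_{\Delta^2N}=\limsup_{k\to\infty}\|\Delta^2N_k\|$. Matrices: $\bar A=\begin{bmatrix}I_p&I_p\\0&I_p\end{bmatrix}$, $\bar C=\begin{bmatrix}I_p&0\end{bmatrix}$, $F=\begin{bmatrix}0&I_p\end{bmatrix}$. *)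

From HB Require Import structures.
From mathcomp Require Import all_boot all_order all_algebra.
From mathcomp Require Import all_classical all_reals all_analysis.
From mathcomp Require Import complex.
Set Implicit Arguments. Unset Strict Implicit. Unset Printing Implicit Defensive.
Import Order.TTheory GRing.Theory Num.Theory.
Import numFieldNormedType.Exports.
Local Open Scope classical_set_scope.
Local Open Scope ring_scope.

Section ESO.
Variable R : realType.

Definition is_vnorm (n : nat) (nu : 'cV[R]_n -> R) : Prop :=
  [/\ forall x, 0 <= nu x,
      forall x, nu x = 0 -> x = 0,
      forall (a : R) x, nu (a *: x) = `|a| * nu x
    & forall x y, nu (x + y) <= nu x + nu y].

Definition classK (a : R -> R) : Prop :=
  [/\ {within [set x : R | 0 <= x], continuous a},
      a 0 = 0
    & forall x y : R, 0 <= x -> x < y -> a x < a y].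

Definition classKinf (a : R -> R) : Prop :=
  classK a /\ (a x @[x --> +oo] --> +oo).

Definition classKL (zeta : R -> nat -> R) : Prop :=
  [/\ forall k, classK (fun r => zeta r k),
      forall r k, 0 <= r -> zeta r k.+1 <= zeta r k
    & forall r, 0 <= r -> zeta r k @[k --> \oo] --> 0].

Definition spectral_radius (n : nat) (A : 'M[R]_n) : R :=
  sup [set ComplexField.Normc.normc z | z in
        [set z : R[i] | eigenvalue (map_mx (fun x : R => (x%:C)%C) A) z]].

Definition dlt (V : zmodType) (f : nat -> V) (k : nat) : V := f k.+1 - f k.
Definition dlt2 (V : zmodType) (f : nat -> V) : nat -> V := dlt (dlt f).

Definition Abar (p : nat) : 'M[R]_(p + p) := block_mx 1%:M 1%:M 0 1%:M.
Definition Cbar (p : nat) : 'M[R]_(p, p + p) := row_mx 1%:M 0.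
Definition Fm (p : nat) : 'M[R]_(p, p + p) := row_mx 0 1%:M.
Definition Bbar (p m : nat) (P : 'M[R]_(p, m)) : 'M[R]_(p + p, m) := col_mx P 0.

Variables (p m : nat) (P : 'M[R]_(p, m)) (Yd : 'cV[R]_p).

Definition Yseq (U : nat -> 'cV[R]_m) (N : nat -> 'cV[R]_p) (k : nat) : 'cV[R]_p :=
  P *m U k + N k.
Definition Eseq (U : nat -> 'cV[R]_m) (N : nat -> 'cV[R]_p) (k : nat) : 'cV[R]_p :=
  Yd - Yseq U N k.
Definition Ubar (U : nat -> 'cV[R]_m) (k : nat) : 'cV[R]_m := - dlt U k.
Definition Dseq (N : nat -> 'cV[R]_p) (k : nat) : 'cV[R]_p := - dlt N k.
Definition Xbar (U : nat -> 'cV[R]_m) (N : nat -> 'cV[R]_p) (k : nat) : 'cV[R]_(p + p) :=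
  col_mx (Eseq U N k) (Dseq N k).

Definition is_eso (L : 'M[R]_(p + p, p)) (U : nat -> 'cV[R]_m)
    (N : nat -> 'cV[R]_p) (Xh : nat -> 'cV[R]_(p + p)) : Prop :=
  forall k, Xh k.+1 = Abar p *m Xh k + Bbar P *m Ubar U k
                      + L *m (Eseq U N k - Cbar p *m Xh k).

Definition Xtil (U : nat -> 'cV[R]_m) (N : nat -> 'cV[R]_p)
    (Xh : nat -> 'cV[R]_(p + p)) (k : nat) : 'cV[R]_(p + p) :=
  Xbar U N k - Xh k.

Variables (nu_p : 'cV[R]_p -> R) (nu_2p : 'cV[R]_(p + p) -> R).

Definition bounded_seq (N : nat -> 'cV[R]_p) : Prop :=
  exists M : R, forall k, nu_p (N k) <= M.

Definition beta_d2N (N : nat -> 'cV[R]_p) : R :=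
  sup (range (fun k => nu_p (dlt2 N k))).
Definition beta_ess_d2N (N : nat -> 'cV[R]_p) : R :=
  limn_sup (fun k => nu_p (dlt2 N k)).

Definition eso_error_bounded_superattractive (L : 'M[R]_(p + p, p)) : Prop :=
  exists (chi1 chi2 : R -> R) (zeta : R -> nat -> R),
    [/\ classKinf chi1, classKinf chi2, classKL zeta &
    forall (U : nat -> 'cV[R]_m) (N : nat -> 'cV[R]_p) (Xh : nat -> 'cV[R]_(p + p)),
      bounded_seq N -> is_eso L U N Xh ->
      (exists beta0 : R, 0 <= beta0 /\
         forall k, nu_2p (Xtil U N Xh k) <= chi1 (beta_d2N N) + zeta beta0 k)
      /\ (limn_esup (fun k => (nu_2p (Xtil U N Xh k))%:E)
            <= (chi2 (beta_ess_d2N N))%:E)%E].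

End ESO.

(* Write M := Abar - L Cbar.  If rho(M) < 1, splitting the characteristic
   polynomial of M over C and peeling off one root at a time from the Cayley-Hamilton identity
   gives |M^k| <= D mu^k for some mu < 1; variation of constants then bounds the error by a
   geometrically decaying transient plus a geometric convolution of |D^2N|, which yields
   linear gains chi1 = chi2 and an exponential KL function.  Conversely, for U = N = 0 the
   error is M^k x(0) with x(0) arbitrary, so the KL bound forces M^k x -> 0 for every x, and
   pairing with a left eigenvector excludes eigenvalues of modulus >= 1.  For (c), the gain
   [2I; I] makes M nilpotent: M^2 = 0. *)

From HB Require Import structures.
From mathcomp Require Import all_boot all_order all_algebra.
From mathcomp Require Import all_classical all_reals all_analysis.
From mathcomp Require Import complex.
From mathcomp Require Import ring lra.
Import Order.TTheory GRing.Theory Num.Theory.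
Import numFieldTopology.Exports numFieldNormedType.Exports.
Local Open Scope classical_set_scope.
Local Open Scope ring_scope.
Set Implicit Arguments. Unset Strict Implicit.

Section MxNorm.
Variable K : realDomainType.

Lemma entry_le_mx_norm m n (A : 'M[K]_(m, n)) i j : `|A i j| <= `|A|.
Proof.
rewrite [leRHS]/Num.norm /= mx_normrE.
exact: (le_bigmax (0 : K) (fun ij : 'I_m * 'I_n => `|A ij.1 ij.2|) (i, j)).
Qed.

Lemma mx_norm_le m n (A : 'M[K]_(m, n)) (b : K) :
  0 <= b -> (forall i j, `|A i j| <= b) -> `|A| <= b.
Proof.
by move=> b0 hA; rewrite [leLHS]/Num.norm /= mx_normrE; apply: bigmax_le => // -[i j].
Qed.

Lemma mx_norm_trmx m n (A : 'M[K]_(m, n)) : `|A^T| <= `|A|.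
Proof. by apply: mx_norm_le => // i j; rewrite mxE entry_le_mx_norm. Qed.

Lemma mx_norm_mulmx m n p (A : 'M[K]_(m, n)) (B : 'M[K]_(n, p)) :
  `|A *m B| <= n%:R * `|A| * `|B|.
Proof.
apply: mx_norm_le => [|i j]; first by rewrite !mulr_ge0.
rewrite mxE; apply: le_trans (ler_norm_sum _ _ _) _.
have -> : n%:R * `|A| * `|B| = \sum_(l < n) `|A| * `|B|.
  by rewrite sumr_const card_ord mulr_natl mulrnAl.
by apply: ler_sum => l _; rewrite normrM ler_pM ?entry_le_mx_norm.
Qed.

End MxNorm.

Lemma lipschitz_continuous (R : realFieldType) (V : normedModType R)
    (f : V -> R) (k : R) :
  0 <= k -> (forall x y, `|f x - f y| <= k * `|x - y|) -> continuous f.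
Proof.
move=> k0 hf v; apply/cvgrPdist_lt => e e0; apply/nbhs_normP.
exists (e / (k + 1)) => [|w /= hw]; first by rewrite /= divr_gt0 // ltr_wpDl.
apply: le_lt_trans (hf v w) _.
have hw' : (k + 1) * `|v - w| < e by rewrite mulrC -ltr_pdivlMr // ltr_wpDl.
by apply: le_lt_trans hw'; rewrite ler_wpM2r // lerDl.
Qed.

Section VectorNorm.
Variables (R : realType) (n : nat) (nu : 'cV[R]_n -> R).
Hypothesis nu_norm : is_vnorm nu.

Lemma vnorm_ge0 x : 0 <= nu x. Proof. by case: nu_norm. Qed.

Lemma vnormZ a x : nu (a *: x) = `|a| * nu x. Proof. by case: nu_norm. Qed.

Lemma vnormD x y : nu (x + y) <= nu x + nu y. Proof. by case: nu_norm. Qed.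

Lemma vnorm0 : nu 0 = 0.
Proof. by rewrite -(scale0r (0 : 'cV_n)) vnormZ normr0 mul0r. Qed.

Lemma vnormN x : nu (- x) = nu x.
Proof. by rewrite -scaleN1r vnormZ normrN normr1 mul1r. Qed.

Lemma vnormB x y : nu (x - y) <= nu x + nu y.
Proof. by rewrite -(vnormN y) vnormD. Qed.

Lemma vnorm_lipschitz x y : `|nu x - nu y| <= nu (x - y).
Proof.
have := vnormD (x - y) y; rewrite subrK => hx.
have := vnormD x (y - x); rewrite addrC subrK -opprB vnormN => hy.
by rewrite ler_norml; apply/andP; split; lra.
Qed.

Lemma vnorm_le_mx_norm : exists2 c, 0 <= c & forall x, nu x <= c * `|x|.
Proof.
exists (\sum_i nu (delta_mx i 0)) => [|x].
  by apply: sumr_ge0 => i _; apply: vnorm_ge0.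
have Ex : x = \sum_i x i 0 *: delta_mx i 0.
  by rewrite {1}(matrix_sum_delta x); apply: eq_bigr => i _; rewrite big_ord1.
rewrite {1}Ex mulr_suml.
apply: le_trans (_ : _ <= \sum_i nu (x i 0 *: delta_mx i 0)) _.
  elim/big_ind2: _ => [|v1 b1 v2 b2 h1 h2|//]; first by rewrite vnorm0.
  exact: le_trans (vnormD _ _) (lerD h1 h2).
apply: ler_sum => i _.
by rewrite vnormZ mulrC ler_wpM2l ?vnorm_ge0 ?entry_le_mx_norm.
Qed.

End VectorNorm.

Lemma mx_norm_le_vnorm (R : realType) n (nu : 'cV[R]_n -> R) :
  is_vnorm nu -> exists2 c, 0 < c & forall x, `|x| <= c * nu x.
Proof.
case: n nu => [|n] nu nu_norm.
  by exists 1 => // x; apply: mx_norm_le => [|[]//]; rewrite mul1r (vnorm_ge0 nu_norm).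
have [K K0 nuK] := vnorm_le_mx_norm nu_norm.
(* Heine-Borel is stated for row vectors, hence the transpositions. *)
pose f (v : 'rV[R]_n.+1) := nu v^T.
pose S := [set v : 'rV[R]_n.+1 | `|v| = 1]%classic.
have f_cont : continuous f.
  apply: (lipschitz_continuous K0) => v w.
  apply: le_trans (vnorm_lipschitz nu_norm _ _) _.
  rewrite -linearB /=; apply: le_trans (nuK _) _.
  by rewrite ler_wpM2l // mx_norm_trmx.
have S_compact : compact S.
  apply: bounded_closed_compact.
    by exists 1; split => [|M M1 v /= ->]; [rewrite realE ler01 | apply: ltW].
  apply: (@preimage_closed _ _ (@Num.norm _ 'rV[R]_n.+1) [set 1]%classic).
    by move=> v _; apply: norm_continuous.
  exact: closed_eq.
have S_nonempty : (S !=set0)%classic.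
  exists (delta_mx 0 0); rewrite /S /=; apply/le_anti/andP; split.
    by apply: mx_norm_le => // i j; rewrite mxE; case: (_ && _); rewrite ?normr1 ?normr0.
  by have := entry_le_mx_norm (delta_mx 0 0 : 'rV[R]_n.+1) 0 0; rewrite mxE !eqxx normr1.
have [v0 v0S v0_min] := compact_EVT_min S_nonempty S_compact (continuous_subspaceT f_cont).
have fv0 : 0 < f v0.
  rewrite lt_def (vnorm_ge0 nu_norm) andbT; apply/eqP.
  have [_ nu_def _ _] := nu_norm; move=> /nu_def /eqP; rewrite trmx_eq0 => /eqP v00.
  by move: v0S; rewrite inE /S /= v00 normr0 => /esym/eqP; rewrite oner_eq0.
exists (f v0)^-1 => [|x]; first by rewrite invr_gt0.
have [->|x0] := eqVneq x 0; first by rewrite normr0 (vnorm0 nu_norm) mulr0.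
have xT0 : `|x^T| != 0 by rewrite normr_eq0 trmx_eq0.
have : f v0 <= f (`|x^T|^-1 *: x^T).
  by apply: v0_min; rewrite inE /S /= normrZ normfV normr_id mulVf.
rewrite /f linearZ /= trmxK (vnormZ nu_norm) normfV normr_id ler_pdivlMl ?normr_gt0 ?trmx_eq0 //.
rewrite ler_pdivlMl // => h; apply: le_trans h; rewrite mulrC ler_wpM2r ?(vnorm_ge0 nu_norm) //.
by have := mx_norm_trmx x^T; rewrite trmxK.
Qed.

Lemma char_poly_split (F : closedFieldType) n (A : 'M[F]_n) :
  exists2 rs : seq F, char_poly A = \prod_(r <- rs) ('X - r%:P)
    & forall z, eigenvalue A z = (z \in rs).
Proof.
have [rs Hrs] := closed_field_poly_normal (char_poly A).
rewrite (monicP (char_poly_monic A)) scale1r in Hrs.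
by exists rs => // z; rewrite eigenvalue_root_char Hrs root_prod_XsubC.
Qed.

Lemma left_eigenvectorX (F : comNzRingType) n (A : 'M[F]_n) (v : 'rV_n) z k :
  v *m A = z *: v -> v *m A ^+ k = z ^+ k *: v.
Proof.
move=> vA; elim: k => [|k IHk]; first by rewrite expr0 mulmx1 scale1r.
by rewrite exprSr -mulmxE mulmxA IHk -scalemxAl vA scalerA -exprSr.
Qed.

Lemma map_mxXn (F G : pzRingType) (f : {rmorphism F -> G}) n (A : 'M[F]_n) k :
  map_mx f (A ^+ k) = map_mx f A ^+ k.
Proof.
elim: k => [|k IHk]; first by rewrite !expr0 map_mx1.
by rewrite !exprS -!mulmxE map_mxM IHk.
Qed.

Section GeometricDecay.
Variable F : numFieldType.

Definition geo_bounded m n (mu : F) (B : nat -> 'M[F]_(m, n)) :=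
  exists D, forall k i j, `|B k i j| <= D * mu ^+ k.

Lemma geometric_rec_le (r mu c D : F) (a b : nat -> F) :
  0 <= mu -> `|a 0%N| <= D -> c + `|r| * D <= mu * D ->
  (forall k, `|b k| <= c * mu ^+ k) ->
  (forall k, a k.+1 = r * a k + b k) -> forall k, `|a k| <= D * mu ^+ k.
Proof.
move=> mu0 a0 hD hb ha; elim=> [|k IHk]; first by rewrite expr0 mulr1.
rewrite ha; apply: le_trans (ler_normD _ _) _; rewrite normrM.
have muk : 0 <= mu ^+ k by rewrite exprn_ge0.
apply: le_trans (lerD (ler_wpM2l (normr_ge0 r) IHk) (hb k)) _.
by rewrite mulrA -mulrDl exprS mulrA [D * mu]mulrC ler_wpM2r // addrC.
Qed.

Variable n : nat.
Implicit Types (A : 'M[F]_n.+1) (q : {poly F}).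

Lemma horner_factor_geo_bounded A q r mu : `|r| < mu ->
  geo_bounded mu (fun k => horner_mx A (('X - r%:P) * q) *m A ^+ k) ->
  geo_bounded mu (fun k => horner_mx A q *m A ^+ k).
Proof.
move=> rmu [D HD]; set Q := horner_mx A q.
have mu0 : 0 < mu by apply: le_lt_trans rmu.
have QAS k : Q *m A ^+ k.+1
    = r *: (Q *m A ^+ k) + horner_mx A (('X - r%:P) * q) *m A ^+ k.
  have AQ : A * Q = Q * A.
    by rewrite /Q -{1}(horner_mx_X A) -rmorphM mulrC rmorphM /= horner_mx_X.
  rewrite rmorphM rmorphB /= horner_mx_X horner_mx_C -/Q exprS !mulmxE.
  rewrite mulrBl mulrBl mulrA -AQ -[r%:M * Q]/(r%:M *m Q) mul_scalar_mx.
  by rewrite -scalerAl addrC subrK.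
have D0 : 0 <= D.
  by have := HD 0%N 0 0; rewrite expr0 mulr1; apply: le_trans (normr_ge0 _).
have gap : 0 < mu - `|r| by rewrite subr_gt0.
pose S := \sum_i \sum_j `|Q i j|.
have S0 : 0 <= S by apply: sumr_ge0 => *; apply: sumr_ge0.
exists (S + D / (mu - `|r|)) => k i j.
apply: (@geometric_rec_le r mu D _ (fun k => (Q *m A ^+ k) i j)
  (fun k => (horner_mx A (('X - r%:P) * q) *m A ^+ k) i j) _ _ _ (fun k => HD k i j)).
- exact: ltW.
- rewrite expr0 mulmx1; apply: le_trans (_ : S <= _); last first.
    by rewrite lerDl divr_ge0 // ltW.
  rewrite /S (bigD1 i) //= (bigD1 j) //= -addrA lerDl.
  by apply: addr_ge0; apply: sumr_ge0 => *; last apply: sumr_ge0.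
- rewrite -lerBrDr -mulrBl mulrDr mulrCA mulfV ?gt_eqF // mulr1 lerDr.
  exact: mulr_ge0 (ltW gap) S0.
- by move=> k'; rewrite QAS !mxE.
Qed.

Lemma horner_prod_geo_bounded A (rs : seq F) mu :
  (forall r, r \in rs -> `|r| < mu) ->
  geo_bounded mu (fun k => horner_mx A (\prod_(r <- rs) ('X - r%:P)) *m A ^+ k) ->
  geo_bounded mu (fun k => A ^+ k).
Proof.
elim: rs => [|r rs IHrs] hrs hA.
  by move: hA; under eq_fun do rewrite big_nil rmorph1 mul1mx.
apply: IHrs => [s srs|]; first by apply: hrs; rewrite inE srs orbT.
apply: (horner_factor_geo_bounded (r := r)); first by apply: hrs; rewrite mem_head.
by move: hA; under eq_fun do rewrite big_cons.
Qed.

End GeometricDecay.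

Lemma pow_geo_bounded (F : numClosedFieldType) n (A : 'M[F]_n.+1) (mu : F) :
  (forall r, eigenvalue A r -> `|r| < mu) -> geo_bounded mu (fun k => A ^+ k).
Proof.
move=> hA; have [rs charA eigA] := char_poly_split A.
apply: (horner_prod_geo_bounded (rs := rs)) => [r|]; first by rewrite -eigA; apply: hA.
by exists 0 => k i j; rewrite -charA Cayley_Hamilton mul0mx mxE normr0 mul0r.
Qed.

Section SpectralRadius.
Variable R : realType.
Local Notation normc := (@ComplexField.Normc.normc R).
Local Notation cmx M := (map_mx (fun x : R => (x%:C)%C) M).

Lemma normc_ge0 (z : R[i]) : 0 <= normc z.
Proof. by case: z => a b; apply: sqrtr_ge0. Qed.

Lemma normcE (z : R[i]) : `|z| = (normc z)%:C%C.
Proof. by case: z. Qed.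

Lemma spectral_radius_le n (M : 'M[R]_n) b : 0 <= b ->
  (forall z, eigenvalue (cmx M) z -> normc z <= b) -> spectral_radius M <= b.
Proof.
move=> b0 hb; rewrite /spectral_radius; set E := (X in sup X).
have [[r Er]|/set0P/negP/negPn/eqP ->] := pselect (E !=set0)%classic.
  by apply: ge_sup => [|_ [z Mz <-]]; [exists r | exact: hb].
by rewrite sup0.
Qed.

Lemma eigenvalue_le_spectral_radius n (M : 'M[R]_n) z :
  eigenvalue (cmx M) z -> normc z <= spectral_radius M.
Proof.
move=> Mz; have [rs _ eigE] := char_poly_split (cmx M).
apply: sup_upper_bound; last by exists z.
split; first by exists (normc z), z.
exists (\big[Num.max/0]_(w <- rs) normc w) => _ [w Mw <-].
by apply: le_bigmax_seq; rewrite -?eigE.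
Qed.

Lemma spectral_radius_lt1 n (M : 'M[R]_n) :
  (forall z, eigenvalue (cmx M) z -> normc z < 1) -> spectral_radius M < 1.
Proof.
move=> hM; have [rs _ eigE] := char_poly_split (cmx M).
apply: (@le_lt_trans _ _ (\big[Num.max/0]_(w <- rs) normc w)).
  apply: spectral_radius_le => [|z]; last by rewrite eigE => zrs; apply: le_bigmax_seq.
  elim/big_ind: _ => // [a b a0 _|w _]; last exact: normc_ge0.
  by rewrite le_max a0.
by rewrite big_seq; apply: bigmax_lt => // z zrs; apply: hM; rewrite eigE.
Qed.

Lemma spectral_radius_nilpotent n (M : 'M[R]_n) k :
  M ^+ k = 0 -> spectral_radius M <= 0.
Proof.
move=> Mk0; apply: spectral_radius_le => // z /eigenvalueP [v vM v0].
have := left_eigenvectorX k vM; rewrite -map_mxXn Mk0 map_mx0 mulmx0.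
move=> /esym/eqP; rewrite scaler_eq0 (negbTE v0) orbF expf_eq0 => /andP[_ /eqP ->].
by rewrite ComplexField.Normc.normc0.
Qed.

Lemma normc_real (x : R) : normc x%:C%C = `|x|.
Proof. by rewrite /= expr0n addr0 sqrtr_sqr. Qed.

Lemma pow_decay n (M : 'M[R]_n) : spectral_radius M < 1 ->
  exists mu D, [/\ 0 < mu, mu < 1, 0 <= D & forall k, `|M ^+ k| <= D * mu ^+ k].
Proof.
case: n M => [|n] M rhoM.
  exists 2^-1, 0; split => // [|k]; first by rewrite invf_lt1 ?ltr1n.
  by apply: mx_norm_le => // -[].
pose mu := (1 + Num.max (spectral_radius M) 0) / 2.
have [rho_mu mu0 mu1] : [/\ spectral_radius M < mu, 0 < mu & mu < 1].
  have h1 : spectral_radius M <= Num.max (spectral_radius M) 0 by rewrite le_max lexx.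
  have h2 : 0 <= Num.max (spectral_radius M) 0 by rewrite le_max lexx orbT.
  have h3 : Num.max (spectral_radius M) 0 < 1 by rewrite gt_max rhoM ltr01.
  by rewrite /mu; split; lra.
have [D HD] : geo_bounded mu%:C%C (fun k => cmx M ^+ k).
  apply: pow_geo_bounded => r Mr; rewrite normcE ltcR.
  exact: le_lt_trans (eigenvalue_le_spectral_radius Mr) rho_mu.
have D0 : 0 <= D.
  by have := HD 0%N 0 0; rewrite expr0 mulr1; apply: le_trans (normr_ge0 _).
exists mu, (normc D); split => // [|k]; first exact: normc_ge0.
apply: mx_norm_le => [|i j]; first by rewrite mulr_ge0 ?normc_ge0 ?exprn_ge0 ?ltW.
have := HD k i j; rewrite -map_mxXn mxE normcE normc_real -{1}(ger0_norm D0) normcE.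
by rewrite -rmorphXn -rmorphM lecR.
Qed.

Lemma spectral_radius_lt1_of_pow_cvg0 n (M : 'M[R]_n) :
  (forall x : 'cV[R]_n, (fun k => M ^+ k *m x) @ \oo --> (0 : 'cV[R]_n)) ->
  spectral_radius M < 1.
Proof.
(* For a left eigenvector v of z, v M^k e_l = z^k v_l cannot tend to 0 when |z| >= 1. *)
move=> Mx0; apply: spectral_radius_lt1 => z /eigenvalueP [v vM v0].
rewrite ltNge; apply/negP => z_ge1.
have [i0 [l vl]] := matrix0Pn _ v0.
pose x := delta_mx l 0 : 'cV[R]_n.
pose S := \sum_i normc (v i0 i).
have vl_le k : normc (v i0 l) <= S * `|M ^+ k *m x|.
  rewrite -lecR -normcE.
  have zk : 1 <= `|z ^+ k|.
    by rewrite normrX exprn_ege1 // normcE -[1]/((1 : R)%:C%C) lecR.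
  apply: le_trans (_ : `|z ^+ k * v i0 l| <= _).
    by rewrite normrM ler_peMl.
  have /matrixP/(_ i0 l) := left_eigenvectorX k vM.
  rewrite [in X in X -> _]mxE [in X in _ = X -> _]mxE => <-.
  apply: le_trans (ler_norm_sum _ _ _) _.
  apply: le_trans (_ : _ <= \sum_i `|v i0 i| * (`|M ^+ k *m x|)%:C%C) _.
    apply: ler_sum => i _; rewrite -map_mxXn mxE normrM ler_wpM2l //.
    rewrite normcE normc_real lecR.
    by have := entry_le_mx_norm (M ^+ k *m x) i 0; rewrite -colE mxE.
  rewrite /S rmorphM rmorph_sum mulr_suml.
  by apply: ler_sum => i _; rewrite normcE.
have vl0 : 0 < normc (v i0 l).
  rewrite lt_def normc_ge0 andbT; apply: contra vl => /eqP.
  by move/ComplexField.Normc.eq0_normc => ->.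
have S0 : 0 <= S by apply: sumr_ge0 => i _; apply: normc_ge0.
have e0 : 0 < normc (v i0 l) / (S + 1) by rewrite divr_gt0 // ltr_wpDl.
have [T _ HT] := (cvgr0Pnorm_lt _).1 (Mx0 x) _ e0.
have := HT T (leqnn T); rewrite /= ltr_pdivlMr ?ltr_wpDl // => hT.
have := vl_le T; have := normr_ge0 (M ^+ T *m x); nra.
Qed.

End SpectralRadius.

Section GeometricConvolution.
Variable R : realFieldType.
Implicit Types (mu b : R) (s : nat -> R).

Definition geo_conv mu s k := \sum_(j < k) mu ^+ (k - j.+1) * s j.

Lemma geo_conv0 mu s : geo_conv mu s 0 = 0.
Proof. by rewrite /geo_conv big_ord0. Qed.

Lemma geo_convS mu s k : geo_conv mu s k.+1 = mu * geo_conv mu s k + s k.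
Proof.
rewrite /geo_conv big_ord_recr /= subnn expr0 mul1r mulr_sumr; congr (_ + _).
by apply: eq_bigr => j _; rewrite mulrA -exprS subSS subnSK.
Qed.

Lemma geo_conv_ge0 mu s k : 0 <= mu -> (forall j, 0 <= s j) -> 0 <= geo_conv mu s k.
Proof. by move=> mu0 s0; apply: sumr_ge0 => j _; rewrite mulr_ge0 ?exprn_ge0. Qed.

Lemma geo_conv_shift_le mu s b J : 0 <= mu < 1 -> 0 <= b ->
  (forall j, (J <= j)%N -> s j <= b) ->
  forall t, geo_conv mu s (J + t) <= mu ^+ t * geo_conv mu s J + b / (1 - mu).
Proof.
case/andP=> mu0 mu1 b0 sb; have gap : 0 < 1 - mu by rewrite subr_gt0.
have fix_b : mu * (b / (1 - mu)) + b = b / (1 - mu) by field; rewrite gt_eqF.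
elim=> [|t IHt]; first by rewrite addn0 expr0 mul1r lerDl divr_ge0 // ltW.
rewrite addnS geo_convS exprS -mulrA -fix_b addrA -mulrDr.
by rewrite lerD ?ler_wpM2l ?sb ?leq_addr.
Qed.

Lemma geo_conv_le mu s b : 0 <= mu < 1 -> 0 <= b -> (forall j, s j <= b) ->
  forall k, geo_conv mu s k <= b / (1 - mu).
Proof.
move=> mu01 b0 sb k; have := @geo_conv_shift_le _ _ _ 0%N mu01 b0 (fun j _ => sb j) k.
by rewrite add0n geo_conv0 mulr0 add0r.
Qed.

End GeometricConvolution.

Lemma lin_rec_sol (F : pzRingType) n (M : 'M[F]_n) (x w : nat -> 'cV[F]_n) :
  (forall k, x k.+1 = M *m x k + w k) ->
  forall k, x k = M ^+ k *m x 0%N + \sum_(j < k) M ^+ (k - j.+1) *m w j.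
Proof.
move=> hx; have MX k : M *m M ^+ k = M ^+ k.+1 by rewrite exprS.
elim=> [|k IHk]; first by rewrite expr0 mul1mx big_ord0 addr0.
rewrite hx IHk mulmxDr mulmxA MX big_ord_recr /= subnn expr0 mul1mx addrA.
congr (_ + _ + _); rewrite mulmx_sumr; apply: eq_bigr => j _.
by rewrite mulmxA MX subSS subnSK.
Qed.

Lemma lin_rec_norm_le (R : realFieldType) n (M : 'M[R]_n) (x w : nat -> 'cV[R]_n)
    (mu D : R) (gam : nat -> R) :
  0 <= mu -> 0 <= D -> (forall k, `|M ^+ k| <= D * mu ^+ k) ->
  (forall k, x k.+1 = M *m x k + w k) -> (forall j, `|w j| <= gam j) ->
  forall k, `|x k| <= n%:R * D * (mu ^+ k * `|x 0%N| + geo_conv mu gam k).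
Proof.
move=> mu0 D0 hM hx hw k; rewrite (lin_rec_sol hx k) mulrDr.
have MXw (j : nat) (y : 'cV[R]_n) : `|M ^+ j *m y| <= n%:R * D * (mu ^+ j * `|y|).
  apply: le_trans (mx_norm_mulmx _ _) _.
  by rewrite !mulrA ler_wpM2r // -mulrA ler_wpM2l.
apply: le_trans (ler_normD _ _) (lerD (MXw _ _) _).
apply: le_trans (ler_norm_sum _ _ _) _; rewrite /geo_conv !mulr_sumr.
apply: ler_sum => j _; apply: le_trans (MXw _ _) _.
by rewrite ler_wpM2l ?mulr_ge0 // ler_wpM2l ?exprn_ge0.
Qed.

Section LimitSuperior.
Variable R : realType.
Implicit Types (u s y : R^nat) (mu : R).

Lemma limn_sup_ev_le u (e : R) : bounded_fun u -> 0 < e ->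
  exists J, forall j, (J <= j)%N -> u j <= limn_sup u + e.
Proof.
move=> bu e0; rewrite limn_supE //.
have inf_sups : has_inf (range (sups u)).
  split; first by exists (sups u 0%N), 0%N.
  exact: bounded_fun_has_lbound_sups.
have [_ [J _ <-] HJ] := inf_adherent e0 inf_sups.
exists J => j Jj; apply: le_trans (ltW HJ).
apply: sup_upper_bound; last by exists j.
split; first by exists (u J), J => /=.
exact/has_ubound_sdrop/bounded_fun_has_ubound.
Qed.

Lemma limn_esup_le_ev y (l : R) :
  (forall e, 0 < e -> exists J, forall k, (J <= k)%N -> y k <= l + e) ->
  (limn_esup (fun k => (y k)%:E) <= l%:E)%E.
Proof.
move=> hy; apply/lee_addgt0Pr => e /hy [J HJ]; rewrite -EFinD.
apply: le_trans (ereal_inf_lbound _) _.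
  by exists [set k | (J <= k)%N]%classic; first by exists J.
by apply: ge_ereal_sup => _ [k Jk <-]; rewrite lee_fin HJ.
Qed.

Lemma geometric_ev_le mu (C e : R) : `|mu| < 1 -> 0 < e ->
  exists T, forall t, (T <= t)%N -> mu ^+ t * C <= e.
Proof.
move=> mu1 e0; have : mu ^+ t * C @[t --> \oo] --> 0.
  by rewrite -(mul0r C); apply: cvgMr_tmp; apply: cvg_expr.
move=> muC; have [T _ HT] := (cvgr0Pnorm_lt _).1 muC _ e0; exists T => t Tt.
exact: le_trans (ler_norm _) (ltW (HT t Tt)).
Qed.

Lemma geo_conv_ev_le s mu (e : R) : 0 <= mu < 1 -> (forall j, 0 <= s j) ->
  bounded_fun s -> 0 < e ->
  exists K, forall k, (K <= k)%N -> geo_conv mu s k <= limn_sup s / (1 - mu) + e.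
Proof.
move=> /[dup] mu01 /andP[mu0 mu1] s0 bs e0.
have gap : 0 < 1 - mu by rewrite subr_gt0.
have e1_gt0 : 0 < e * (1 - mu) / 2 by rewrite divr_gt0 ?mulr_gt0.
have [J HJ] := limn_sup_ev_le bs e1_gt0.
have sJ : 0 <= limn_sup s + e * (1 - mu) / 2 by apply: le_trans (HJ J (leqnn J)).
have mu_norm : `|mu| < 1 by rewrite ger0_norm.
have [T HT] := geometric_ev_le (geo_conv mu s J) mu_norm (divr_gt0 e0 (ltr0Sn _ 1)).
exists (J + T)%N => k JTk.
have [t -> Tt] : exists2 t, k = (J + t)%N & (T <= t)%N.
  by exists (k - J)%N; rewrite ?subnKC ?leq_subRL // (leq_trans (leq_addr _ _) JTk).
apply: le_trans (geo_conv_shift_le mu01 sJ HJ t) _.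
have -> : (limn_sup s + e * (1 - mu) / 2) / (1 - mu) = limn_sup s / (1 - mu) + e / 2.
  by field; rewrite gt_eqF.
have := HT t Tt; lra.
Qed.

Lemma limn_esup_geo_conv_le y s (a b mu : R) :
  0 <= mu < 1 -> 0 <= b -> (forall j, 0 <= s j) -> bounded_fun s ->
  (forall k, y k <= a * mu ^+ k + b * geo_conv mu s k) ->
  (limn_esup (fun k => (y k)%:E) <= (b / (1 - mu) * limn_sup s)%:E)%E.
Proof.
move=> /[dup] mu01 /andP[mu0 mu1] b0 s0 bs hy.
apply: limn_esup_le_ev => e e0.
have mu_norm : `|mu| < 1 by rewrite ger0_norm.
have b1 : 0 < b + 1 by rewrite ltr_wpDl.
have [K1 HK1] := geometric_ev_le a mu_norm (divr_gt0 e0 (ltr0Sn _ 1)).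
have e' : 0 < e / (2 * (b + 1)) by rewrite divr_gt0 // mulr_gt0.
have [K2 HK2] := geo_conv_ev_le mu01 s0 bs e'.
exists (maxn K1 K2) => k; rewrite geq_max => /andP[/HK1 h1 /HK2 h2].
apply: le_trans (hy k) _; rewrite mulrC in h1.
have := ler_wpM2l b0 h2; rewrite mulrDr mulrA => h3.
have be : b * (e / (2 * (b + 1))) <= e / 2.
  have -> : b * (e / (2 * (b + 1))) = b / (b + 1) * (e / 2) by field; rewrite gt_eqF.
  by apply: ler_piMl; [rewrite divr_ge0 ?ltW | rewrite ler_pdivrMr // mul1r lerDl].
lra.
Qed.

End LimitSuperior.

Lemma bounded_fun_nonneg_le (R : realType) (u : R^nat) b :
  (forall j, 0 <= u j <= b) -> bounded_fun u.
Proof.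
move=> ub; exists b; split; first exact: num_real.
move=> M bM j _ /=; have /andP[u0 ujb] := ub j.
by rewrite ger0_norm // (le_trans ujb) // ltW.
Qed.

Section ComparisonFunctions.
Variable R : realType.

Lemma linear_classK (a : R) : 0 < a -> classK (fun r => a * r).
Proof.
move=> a0; split.
- by apply: continuous_subspaceT; apply: mulrl_continuous.
- by rewrite mulr0.
- by move=> x y _ xy; rewrite ltr_pM2l.
Qed.

Lemma linear_classKinf (a : R) : 0 < a -> classKinf (fun r => a * r).
Proof.
move=> a0; split; first exact: linear_classK.
apply/cvgryPge => M; near=> x.
rewrite -ler_pdivrMl //; near: x; apply: nbhs_pinfty_ge; exact: num_real.
Unshelve. all: by end_near.
Qed.

Lemma geometric_classKL (a mu : R) : 0 < a -> 0 < mu < 1 ->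
  classKL (fun r k => a * r * mu ^+ k).
Proof.
move=> a0 /andP[mu0 mu1]; split => [k|r k r0|r r0].
- have -> : (fun r => a * r * mu ^+ k) = (fun r => (a * mu ^+ k) * r).
    by apply: funext => r; rewrite mulrAC.
  by apply: linear_classK; rewrite mulr_gt0 // exprn_gt0.
- rewrite exprS mulrCA -[leRHS]mul1r; apply: ler_wpM2r (ltW mu1).
  by rewrite !mulr_ge0 ?exprn_ge0 ?(ltW a0) ?(ltW mu0).
- rewrite -(mulr0 (a * r)); apply: cvgMl_tmp.
  by apply: cvg_expr; rewrite gtr0_norm.
Qed.

End ComparisonFunctions.

Section ExtendedStateObserver.
Variables (R : realType) (p m : nat) (P : 'M[R]_(p, m)) (Yd : 'cV[R]_p).
Implicit Types (L : 'M[R]_(p + p, p)) (U : nat -> 'cV[R]_m) (N : nat -> 'cV[R]_p)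
  (Xh : nat -> 'cV[R]_(p + p)).

Lemma Eseq_Cbar U N k : Eseq P Yd U N k = Cbar R p *m Xbar P Yd U N k.
Proof. by rewrite /Cbar /Xbar mul_row_col mul1mx mul0mx addr0. Qed.

Lemma Xbar_step U N k :
  Xbar P Yd U N k.+1
  = Abar R p *m Xbar P Yd U N k + Bbar P *m Ubar U k - (Fm R p)^T *m dlt2 N k.
Proof.
rewrite /Xbar /Abar /Bbar /Fm tr_row_mx trmx0 trmx1 mul_block_col !mul1mx !mul0mx.
rewrite add0r !mul_col_mx mul0mx mul1mx mul0mx opp_col_mx !add_col_mx oppr0 !addr0.
congr col_mx; apply/matrixP => i j.
  by rewrite /Eseq /Yseq /Dseq /Ubar /dlt mulmxN mulmxBr !mxE; ring.
by rewrite /Dseq /dlt2 /dlt !mxE; ring.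
Qed.

Lemma eso_step L U N Xh : is_eso P Yd L U N Xh -> forall k,
  Xh k.+1 = (Abar R p - L *m Cbar R p) *m Xh k + Bbar P *m Ubar U k
            + L *m Eseq P Yd U N k.
Proof.
move=> eso k; rewrite eso mulmxBl mulmxBr -mulmxA.
by apply/matrixP => i j; rewrite !mxE; ring.
Qed.

Lemma eso_error_step L U N Xh : is_eso P Yd L U N Xh -> forall k,
  Xtil P Yd U N Xh k.+1
  = (Abar R p - L *m Cbar R p) *m Xtil P Yd U N Xh k - (Fm R p)^T *m dlt2 N k.
Proof.
move=> eso k; rewrite /Xtil Xbar_step eso Eseq_Cbar !mulmxBr !mulmxBl !mulmxA.
by apply/matrixP => i j; rewrite !mxE; ring.
Qed.

End ExtendedStateObserver.

Lemma dlt2_vnorm_le (R : realType) n (nu : 'cV[R]_n -> R) (N : nat -> 'cV[R]_n) b :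
  is_vnorm nu -> (forall k, nu (N k) <= b) -> forall j, nu (dlt2 N j) <= 4 * b.
Proof.
move=> nuN Nb j; rewrite /dlt2 /dlt.
apply: le_trans (vnormB nuN _ _) _.
apply: le_trans (lerD (vnormB nuN _ _) (vnormB nuN _ _)) _.
by have := Nb j; have := Nb j.+1; have := Nb j.+2; lra.
Qed.

Lemma mx_norm_Fm_tr (R : realType) p (v : 'cV[R]_p) : `|(Fm R p)^T *m v| <= `|v|.
Proof.
rewrite /Fm tr_row_mx trmx0 trmx1 mul_col_mx mul0mx mul1mx.
apply: mx_norm_le => // i j; rewrite mxE; case: splitP => k _.
  by rewrite mxE normr0.
exact: entry_le_mx_norm.
Qed.

Section ErrorDynamics.
Variables (R : realType) (p m : nat) (P : 'M[R]_(p, m)) (Yd : 'cV[R]_p).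
Variables (nu_p : 'cV[R]_p -> R) (nu_2p : 'cV[R]_(p + p) -> R).
Hypotheses (nu_p_norm : is_vnorm nu_p) (nu_2p_norm : is_vnorm nu_2p).
Variable L : 'M[R]_(p + p, p).
Local Notation M := (Abar R p - L *m Cbar R p).
Local Notation U0 := (fun _ : nat => 0 : 'cV[R]_m).
Local Notation N0 := (fun _ : nat => 0 : 'cV[R]_p).

Lemma eso_error_le : spectral_radius M < 1 ->
  exists A c mu, [/\ 0 < A, 0 < c, 0 < mu < 1 &
    forall U N Xh, is_eso P Yd L U N Xh -> forall k,
      nu_2p (Xtil P Yd U N Xh k)
      <= A * `|Xtil P Yd U N Xh 0%N| * mu ^+ k
         + A * c * geo_conv mu (fun j => nu_p (dlt2 N j)) k].
Proof.
move=> rhoM; have [mu [D [mu0 mu1 D0 MD]]] := pow_decay rhoM.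
have [K K0 nuK] := vnorm_le_mx_norm nu_2p_norm.
have [c c0 cnu] := mx_norm_le_vnorm nu_p_norm.
pose A := K * ((p + p)%:R * D) + 1.
have A0 : 0 < A by rewrite ltr_wpDl ?mulr_ge0.
exists A, c, mu; split => //; first by rewrite mu0.
move=> U N Xh eso k; set x := Xtil P Yd U N Xh.
set s := fun j => nu_p (dlt2 N j).
have hw j : `|- ((Fm R p)^T *m dlt2 N j)| <= c * s j.
  by rewrite normrN; apply: le_trans (mx_norm_Fm_tr _) (cnu _).
have := lin_rec_norm_le (ltW mu0) D0 MD (eso_error_step eso) hw k.
have -> : geo_conv mu (fun j => c * s j) k = c * geo_conv mu s k.
  by rewrite /geo_conv mulr_sumr; apply: eq_bigr => j _; rewrite mulrCA.
move=> hx; apply: le_trans (nuK _) _; apply: le_trans (ler_wpM2l K0 hx) _.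
have bound0 : 0 <= mu ^+ k * `|x 0%N| + c * geo_conv mu s k.
  rewrite addr_ge0 ?mulr_ge0 ?exprn_ge0 ?geo_conv_ge0 ?(ltW mu0) ?(ltW c0) //.
  by move=> j; apply: vnorm_ge0.
have -> : A * `|x 0%N| * mu ^+ k + A * c * geo_conv mu s k
    = A * (mu ^+ k * `|x 0%N| + c * geo_conv mu s k) by ring.
by rewrite mulrA ler_wpM2r // lerDl.
Qed.

Lemma eso_bounded_superattractive_of_rho_lt1 : spectral_radius M < 1 ->
  eso_error_bounded_superattractive P Yd nu_p nu_2p L.
Proof.
move=> /eso_error_le [A [c [mu [A0 c0 mu01 hx]]]].
have /andP[mu0 mu1] := mu01.
have gain0 : 0 < A * c / (1 - mu) by rewrite !mulr_gt0 // invr_gt0 subr_gt0.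
exists (fun r => A * c / (1 - mu) * r), (fun r => A * c / (1 - mu) * r).
exists (fun r k => A * r * mu ^+ k); split.
- exact: linear_classKinf.
- exact: linear_classKinf.
- exact: geometric_classKL.
move=> U N Xh [b Nb] eso; set s := fun j => nu_p (dlt2 N j).
have s_bnd j : 0 <= s j <= 4 * b.
  by rewrite vnorm_ge0 // (dlt2_vnorm_le nu_p_norm Nb).
have s_bounded := bounded_fun_nonneg_le s_bnd.
have mu01' : 0 <= mu < 1 by rewrite ltW.
split.
- exists `|Xtil P Yd U N Xh 0%N|; split => // k.
  have s_beta j : s j <= beta_d2N nu_p N.
    apply: sup_upper_bound; last by exists j.
    split; [by exists (s 0%N), 0%N | exact: bounded_fun_has_ubound].
  have beta0 : 0 <= beta_d2N nu_p N by apply: le_trans (s_beta 0%N); case/andP: (s_bnd 0%N).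
  apply: le_trans (hx _ _ _ eso k) _; rewrite addrC lerD2r -mulrA.
  rewrite [leRHS]mulrAC -!mulrA ler_wpM2l ?mulr_ge0 ?(ltW A0) ?(ltW c0) //.
  by rewrite ler_wpM2l ?(ltW c0) // geo_conv_le.
- rewrite /beta_ess_d2N; apply: limn_esup_geo_conv_le (hx _ _ _ eso) => //.
  + by rewrite mulr_ge0 ?(ltW A0) ?(ltW c0).
  + by move=> j; case/andP: (s_bnd j).
Qed.

Lemma eso_error_unforced (x0 : 'cV[R]_(p + p)) :
  exists Xh, is_eso P Yd L U0 N0 Xh /\ forall k, Xtil P Yd U0 N0 Xh k = M ^+ k *m x0.
Proof.
pose step y := Abar R p *m y + Bbar P *m Ubar U0 0 + L *m (Eseq P Yd U0 N0 0 - Cbar R p *m y).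
exists (fun k => iter k step (Xbar P Yd U0 N0 0 - x0)).
have eso : is_eso P Yd L U0 N0 (fun k => iter k step (Xbar P Yd U0 N0 0 - x0)).
  by move=> k; rewrite iterS.
split => // k; elim: k => [|k IHk].
  by rewrite expr0 mul1mx /Xtil /= opprB addrC subrK.
by rewrite (eso_error_step eso) IHk /dlt2 /dlt !subrr mulmx0 subr0 exprS mulmxA.
Qed.

Lemma beta_d2N_cst0 : beta_d2N nu_p N0 = 0.
Proof.
rewrite /beta_d2N (_ : (fun k => _) = fun=> 0); first by rewrite set_cst (negbTE setT0) sup1.
by apply: funext => k; rewrite /dlt2 /dlt !subrr vnorm0.
Qed.

Lemma rho_lt1_of_eso_bounded_superattractive :
  eso_error_bounded_superattractive P Yd nu_p nu_2p L -> spectral_radius M < 1.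
Proof.
move=> [chi1 [chi2 [zeta [[[_ chi1_0 _] _] _ [_ _ zeta_cvg0] hyp]]]].
have [c c0 cnu] := mx_norm_le_vnorm nu_2p_norm.
apply: spectral_radius_lt1_of_pow_cvg0 => x.
have [Xh [eso Xtil_pow]] := eso_error_unforced x.
have N0_bounded : bounded_seq nu_p N0 by exists 0 => k; rewrite vnorm0.
have [[b0 [b00 hb]] _] := hyp _ _ _ N0_bounded eso.
apply/norm_cvg0P/(@squeeze_cvgr _ _ _ _ (cst 0) (fun k => c * zeta b0 k)).
- near=> k; rewrite normr_ge0 /=.
  have := hb k; rewrite beta_d2N_cst0 chi1_0 add0r Xtil_pow => hk.
  by apply: le_trans (cnu _) _; rewrite ler_wpM2l // ltW.
- exact: cvg_cst.
- by rewrite -(mulr0 c); apply: cvgMl_tmp; apply: zeta_cvg0.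
Unshelve. all: by end_near.
Qed.

End ErrorDynamics.

Lemma deadbeat_gain (R : realType) p :
  spectral_radius (Abar R p - col_mx (1%:M *+ 2) 1%:M *m Cbar R p) <= 0.
Proof.
apply: (spectral_radius_nilpotent (k := 2)).
rewrite expr2 -mulmxE /Abar /Cbar mul_col_row !mulmx0 !mulmx1 opp_block_mx.
rewrite add_block_mx mulmx_block.
have e : 1%:M - 1%:M *+ 2 = - 1%:M :> 'M[R]_p by rewrite mulr2n opprD addrA subrr add0r.
by rewrite e subr0 sub0r !(mulmxN, mulNmx, mulmx1, opprK, subrr, addNr) block_mx0.
Qed.

Theorem lemma3 (R : realType) (p m : nat) (P : 'M[R]_(p, m)) (Yd : 'cV[R]_p)
    (nu_p : 'cV[R]_p -> R) (nu_2p : 'cV[R]_(p + p) -> R) :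
  is_vnorm nu_p -> is_vnorm nu_2p ->
  (* (a) *)
  (forall (L : 'M[R]_(p + p, p)) (U : nat -> 'cV[R]_m) (N : nat -> 'cV[R]_p)
          (Xh : nat -> 'cV[R]_(p + p)),
     is_eso P Yd L U N Xh ->
     forall k,
       Xh k.+1 = (Abar R p - L *m Cbar R p) *m Xh k + Bbar P *m Ubar U k
                 + L *m Eseq P Yd U N k
       /\ Xtil P Yd U N Xh k.+1
            = (Abar R p - L *m Cbar R p) *m Xtil P Yd U N Xh k
              - (Fm R p)^T *m dlt2 N k)
  (* (b) *)
  /\ (forall L : 'M[R]_(p + p, p),
        eso_error_bounded_superattractive P Yd nu_p nu_2p L
        <-> spectral_radius (Abar R p - L *m Cbar R p) < 1)
  (* (c) *)
  /\ (exists L : 'M[R]_(p + p, p), spectral_radius (Abar R p - L *m Cbar R p) < 1).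
Proof.
move=> nu_p_norm nu_2p_norm; split.
  by move=> L U N Xh eso k; split; [exact: eso_step | exact: eso_error_step].
split.
  move=> L; split.
    exact: rho_lt1_of_eso_bounded_superattractive.
  exact: eso_bounded_superattractive_of_rho_lt1.
by exists (col_mx (1%:M *+ 2) 1%:M); apply: le_lt_trans (deadbeat_gain R p) ltr01.
Qed.
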